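(* Let $p\colon X\to Y$ be an approximately invertible continuous surjection between (Tychonoff) spaces. If $X$ is a finite $C$-space, then so is $Y$.
   Context: A set is functionally open if it is a cozero set. $X$ is a finite $C$-space if for every sequence $\{\omega_n\}$ of finite covers of $X$ by functionally open sets there exist $k$ and finite families $\gamma_1,\dots,\gamma_k$ of pairwise disjoint functionally open sets such that each $\gamma_n$ refines $\omega_n$ and $\bigcup_{n=1}^k\gamma_n$ covers $X$. A map $p\colon X\to Y$ is approximately invertible if there exists a $C^*$-embedding $i\colon X\to Z$ into a space $Z$ such that for every collection $\mathcal W$ of open subsets of $Z$ refined by $\{i(p^{-1}(y)):y\in Y\}$, there is a continuous map $g\colon Y\to Z$ with $g\circ p$ $\mathcal W$-close to $i$, i.e. each set $\{g(p(x)),i(x)\}$, $x\in X$, is contained in some member of $\mathcal W$. *)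

From HB Require Import structures.
From mathcomp Require Import all_boot all_order all_algebra.
From mathcomp Require Import all_classical all_reals.
From mathcomp Require Import topology normedtype.
Import numFieldNormedType.Exports.
Set Implicit Arguments. Unset Strict Implicit. Unset Printing Implicit Defensive.
Import Order.TTheory GRing.Theory Num.Theory.
Local Open Scope classical_set_scope.
Local Open Scope ring_scope.

(* Real-valued functions take values in an arbitrary realType R
   (all realTypes are isomorphic, so this is the usual real line). *)

Definition completely_regular (R : realType) (T : topologicalType) : Prop :=
  forall (a : T) (B : set T), closed B -> ~ B a ->
    exists f : T -> R, continuous f /\ f a = 0 /\ (forall b, B b -> f b = 1).

Definition tychonoff_space (R : realType) (T : topologicalType) : Prop :=
  accessible_space T /\ completely_regular R T.

Definition functionally_open (R : realType) (T : topologicalType) (U : set T) : Prop :=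
  exists f : T -> R, continuous f /\ U = [set x | f x != 0].

Definition finite_C_space (R : realType) (X : topologicalType) : Prop :=
  forall omega : nat -> set (set X),
    (forall n, finite_set (omega n)) ->
    (forall n U, omega n U -> functionally_open R U) ->
    (forall n (x : X), exists U, omega n U /\ U x) ->
    exists (k : nat) (gamma : nat -> set (set X)),
      (forall n, (n < k)%N -> finite_set (gamma n)) /\
      (forall n U, (n < k)%N -> gamma n U -> functionally_open R U) /\
      (forall n U V, (n < k)%N -> gamma n U -> gamma n V -> U <> V ->
          U `&` V = set0) /\
      (forall n U, (n < k)%N -> gamma n U ->
          exists V, omega n V /\ U `<=` V) /\
      (forall x : X, exists n U, (n < k)%N /\ gamma n U /\ U x).

Definition top_embedding (X Z : topologicalType) (i : X -> Z) : Prop :=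
  continuous i /\ injective i /\
  (forall U : set X, open U -> exists V : set Z, open V /\ i @^-1` V = U).

Definition Cstar_embedding (R : realType) (X Z : topologicalType) (i : X -> Z) : Prop :=
  top_embedding i /\
  forall f : X -> R, continuous f -> (exists M : R, forall x, `|f x| <= M) ->
    exists g : Z -> R, continuous g /\ (exists M : R, forall z, `|g z| <= M) /\
      (forall x, g (i x) = f x).

Definition approximately_invertible (R : realType) (X Y : topologicalType)
    (p : X -> Y) : Prop :=
  exists (Z : topologicalType) (i : X -> Z),
    tychonoff_space R Z /\ Cstar_embedding R i /\
    forall W : set (set Z),
      (forall V, W V -> open V) ->
      (forall y : Y, exists V, W V /\ i @` (p @^-1` [set y]) `<=` V) ->
      exists g : Y -> Z, continuous g /\
        forall x : X, exists V, W V /\ V (g (p x)) /\ V (i x).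

From HB Require Import structures.
From mathcomp Require Import all_boot all_order all_algebra.
From mathcomp Require Import all_classical all_reals.
From mathcomp Require Import finmap topology normedtype lra.
Import numFieldNormedType.Exports.
Set Implicit Arguments. Unset Strict Implicit. Unset Printing Implicit Defensive.
Import Order.TTheory GRing.Theory Num.Theory.
Local Open Scope classical_set_scope.
Local Open Scope ring_scope.

(* Normalizing the cozero functions of a finite cozero cover omega_m of Y by
   their pointwise maximum gives functions phi_(m,O) whose superlevel sets
   [phi_(m,O) > 1/2] still cover Y.  Their preimages under p cover X, so X
   provides disjoint cozero families gamma_0, ..., gamma_(k-1), each member U
   of gamma_m lying in some p^-1 [phi_(m,O) > 1/2].  The C*-embedding
   i : X -> Z extends the cozero functions of the U's and the functions
   phi_(m,O) o p to Z.  The cell of U in gamma_m is the cozero set where the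
   extension for U strictly dominates those of the other members of gamma_m
   and the extension of phi_(m,O) exceeds 1/2: cells of one gamma_m are
   disjoint, and i maps each fibre p^-1 y into the union of the cells, at
   points whose phi-coordinates are within 1/8 of those of y.  An approximate
   inverse g for these neighbourhoods pulls the cells back to disjoint cozero
   families on Y, and the 1/8-closeness forces g^-1 (cell U) to lie in O. *)

Lemma choice_on {A : Type} {B : pointedType} (P : A -> Prop) (Q : A -> B -> Prop) :
  (forall a, P a -> exists b, Q a b) -> exists f : A -> B, forall a, P a -> Q a (f a).
Proof.
move=> PQ; suff [f Pf] : {f : A -> B & forall a, P a -> Q a (f a)} by exists f.
apply: (@choice A B (fun a b => P a -> Q a b)) => a.
have [/PQ[b Qab]|NPa] := pselect (P a); first by exists b.
by exists point => /NPa.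
Qed.

Section functionally_open.
Context {R : realType} {T : topologicalType}.
Implicit Types (U V : set T) (f h : T -> R).

Lemma functionally_open_lt f h : continuous f -> continuous h ->
  functionally_open R [set x | f x < h x].
Proof.
move=> fc hc; exists (fun x => Num.max (h x - f x) 0); split.
  move=> x; apply: (@continuous_max R T (fun x => h x - f x) (cst 0)).
    by apply: cvgB; [exact: hc|exact: fc].
  exact: cvg_cst.
apply/seteqP; split=> x /=; first by move=> fh; rewrite gt_eqF // lt_max subr_gt0 fh.
by case: ltP => // hf; rewrite max_r ?subr_le0 ?eqxx.
Qed.

Lemma functionally_openP U : functionally_open R U <->
  exists f, [/\ continuous f, forall x, 0 <= f x <= 1 & U = [set x | 0 < f x]].
Proof.
split=> [[f [fc ->]]|[f [fc _ ->]]]; last first.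
  exact: (@functionally_open_lt (fun=> 0) f (fun x => cvg_cst _) fc).
exists (fun x => Num.min `|f x| 1); split.
- move=> x; apply: (@continuous_min R T (fun x => `|f x|) (cst 1)); last exact: cvg_cst.
  by apply: cvg_norm; exact: fc.
- by move=> x; rewrite le_min normr_ge0 ler01 /= ge_min lexx orbT.
- by apply/seteqP; split=> x /=; rewrite lt_min normr_gt0 ltr01 andbT.
Qed.

Lemma functionally_open_open U : functionally_open R U -> open U.
Proof.
case/functionally_openP=> f [fc _ ->].
by apply: (@open_comp _ _ f [set r | 0 < r]) => [x _|]; [exact: fc|exact: open_gt].
Qed.

Lemma functionally_openI U V : functionally_open R U -> functionally_open R V ->
  functionally_open R (U `&` V).
Proof.
move=> [f [fc ->]] [h [hc ->]]; exists (fun x => f x * h x); split.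
  by move=> x; apply: cvgM; [exact: fc|exact: hc].
by apply/seteqP; split=> x /=; rewrite mulf_eq0 negb_or => /andP.
Qed.

Lemma functionally_open_bigcap (I : eqType) (D : set I) (F : I -> set T) :
  finite_set D -> (forall j, D j -> functionally_open R (F j)) ->
  functionally_open R (\bigcap_(j in D) F j).
Proof.
case/finite_seqP=> s ->; elim: s => [|j s IHs] Fo.
  rewrite set_nil bigcap_set0; exists (fun _ => 1); split; first exact: cst_continuous.
  by apply/seteqP; split=> x; rewrite /= oner_eq0.
have -> : [set` j :: s] = j |` [set` s].
  apply/seteqP; split=> x /=; rewrite in_cons; first by move/predU1P.
  by case=> [->|->]; rewrite ?eqxx ?orbT.
rewrite bigcap_setU1; apply: functionally_openI; first by apply: Fo; rewrite /= mem_head.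
by apply: IHs => i si; apply: Fo; rewrite /= in_cons si orbT.
Qed.

Lemma functionally_open_preimage (S : topologicalType) (g : S -> T) U :
  continuous g -> functionally_open R U -> functionally_open R (g @^-1` U).
Proof.
move=> gc [f [fc ->]]; exists (f \o g); split=> //.
by move=> x; apply: continuous_comp; [exact: gc|exact: fc].
Qed.

End functionally_open.

Definition finite_cozero_cover (R : realType) (T : topologicalType)
    (omega : set (set T)) : Prop :=
  [/\ finite_set omega, forall U, omega U -> functionally_open R U
    & forall x, exists U, omega U /\ U x].

Definition disjoint_cozero_refinement (R : realType) (T : topologicalType)
    (omega : nat -> set (set T)) (k : nat) (gamma : nat -> set (set T)) : Prop :=
  (forall n, (n < k)%N -> finite_set (gamma n)) /\
  (forall n U, (n < k)%N -> gamma n U -> functionally_open R U) /\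
  (forall n U V, (n < k)%N -> gamma n U -> gamma n V -> U <> V -> U `&` V = set0) /\
  (forall n U, (n < k)%N -> gamma n U -> exists V, omega n V /\ U `<=` V) /\
  (forall x, exists n U, (n < k)%N /\ gamma n U /\ U x).

Lemma finite_C_spaceP (R : realType) (T : topologicalType) :
  finite_C_space R T <-> forall omega : nat -> set (set T),
    (forall n, finite_cozero_cover R (omega n)) ->
    exists k gamma, disjoint_cozero_refinement R omega k gamma.
Proof.
split=> [TC omega omega_cover | TC omega fin fo cover].
  by apply: TC => n; have [] := omega_cover n.
by apply: TC => n; split; [exact: fin|exact: fo|exact: cover].
Qed.

Lemma refinement_labelling (T : Type) (B : pointedType) (omega : nat -> set B)
    (f : nat -> B -> set T) (k : nat) (gamma : nat -> set (set T)) :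
  (forall m U, (m < k)%N -> gamma m U -> exists V, (f m @` omega m) V /\ U `<=` V) ->
  exists lab : nat -> set T -> B, forall m U, (m < k)%N -> gamma m U ->
    omega m (lab m U) /\ U `<=` f m (lab m U).
Proof.
move=> gamma_ref.
have lab_at m : exists l : set T -> B, forall U, (m < k)%N /\ gamma m U ->
    omega m (l U) /\ U `<=` f m (l U).
  apply: (@choice_on _ _ (fun U => (m < k)%N /\ gamma m U)
    (fun U O => omega m O /\ U `<=` f m O)) => U [mk gU].
  by have [_ [[O oO <-] UO]] := gamma_ref m U mk gU; exists O.
have [lab labP] := choice lab_at.
by exists lab => m U mk gU; exact: labP.
Qed.

Section cozero_cover.
Context {R : realType} {T : topologicalType}.

Lemma finite_cozero_cover_preimage (S : topologicalType) (f : S -> T) omega :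
  continuous f -> finite_cozero_cover R omega ->
  finite_cozero_cover R (preimage f @` omega).
Proof.
move=> fc [fin fo cover]; split.
- exact: finite_image.
- by move=> _ [U /fo Ufo <-]; exact: functionally_open_preimage.
- move=> x; have [U [oU Ufx]] := cover (f x).
  by exists (f @^-1` U); split => //; exists U.
Qed.

Lemma normalized_cozero_cover (omega : set (set T)) :
  finite_cozero_cover R omega ->
  exists phi : set T -> T -> R,
    [/\ forall O, omega O -> continuous (phi O),
         forall O x, omega O -> 0 <= phi O x <= 1,
         forall O x, omega O -> 0 < phi O x -> O x
       & forall x, exists2 O, omega O & phi O x = 1].
Proof.
case=> /finite_fsetP[s ->] omega_fo omega_cover.
have [u uP] := choice_on (fun O sO => (functionally_openP O).1 (omega_fo O sO)).
pose M x := \big[Num.max/0]_(j : s) u (val j) x.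
have u_le_M O x (sO : O \in s) : u O x <= M x.
  exact: (le_bigmax _ (fun j : s => u (val j) x) (FSetSub sO)).
have M_gt0 x : 0 < M x.
  have [O [sO Ox]] := omega_cover x; have [_ _ uO] := uP O sO.
  by rewrite uO in Ox; exact: lt_le_trans Ox (u_le_M O x sO).
have M_cont : continuous M.
  rewrite /M; apply: (@continuous_big _ _ _ _ xpredT max_continuous) => j _.
  by have [] := uP _ (valP j).
exists (fun O x => Num.min (u O x / M x) 1); split.
- move=> O /uP[uc _ _] x.
  apply: (@continuous_min R T (fun x => u O x / M x) (cst 1)); last exact: cvg_cst.
  apply: cvgM; [exact: uc|apply: cvgV; [by rewrite gt_eqF|exact: M_cont]].
- move=> O x /uP[_ u01 _]; rewrite le_min ler01 ge_min lexx orbT !andbT.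
  by rewrite divr_ge0 ?(ltW (M_gt0 x)) //; case/andP: (u01 x).
- move=> O x /uP[_ _ uO]; rewrite lt_min ltr01 andbT pmulr_lgt0 ?invr_gt0 ?M_gt0 //.
  by move=> uOx; rewrite uO.
move=> x; have [O [sO _]] := omega_cover x.
have u_ge0 (j : s) : 0 <= u (val j) x by have [_ /(_ x)/andP[]] := uP _ (valP j).
have [j _ Mj] := eq_bigmax (FSetSub sO) xpredT _ erefl (fun j _ => u_ge0 j).
have {}Mj : M x = u (val j) x by [].
exists (val j); first exact: valP.
by rewrite -Mj divff ?minxx // gt_eqF.
Qed.

Lemma superlevel_cozero_cover (omega : set (set T)) (phi : set T -> T -> R) :
  finite_set omega -> (forall O, omega O -> continuous (phi O)) ->
  (forall x, exists2 O, omega O & phi O x = 1) ->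
  finite_cozero_cover R ((fun O => [set x | 2^-1 < phi O x]) @` omega).
Proof.
move=> fin phic phi1; split.
- exact: finite_image.
- by move=> _ [O /phic Oc <-]; apply: functionally_open_lt => // x; exact: cvg_cst.
- move=> x; have [O oO phiO] := phi1 x; exists [set x | 2^-1 < phi O x]; split.
    by exists O.
  by rewrite /= phiO invf_lt1 // ltr1n.
Qed.

End cozero_cover.

Section Cstar_embedding_extension.
Context {R : realType} {X Z : topologicalType} (i : X -> Z).
Hypothesis i_Cstar : Cstar_embedding R i.

Lemma Cstar_embedding_extend01 (f : X -> R) :
  continuous f -> (forall x, 0 <= f x <= 1) ->
  exists F : Z -> R, continuous F /\ forall x, F (i x) = f x.
Proof.
move=> fc f01; have [|F [Fc [_ Fi]]] := i_Cstar.2 f fc; last by exists F.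
by exists 1 => x; have /andP[f0 f1] := f01 x; rewrite ger0_norm.
Qed.

Lemma Cstar_embedding_extend_cozero (U : set X) : functionally_open R U ->
  exists F : Z -> R, continuous F /\ forall x, U x <-> 0 < F (i x).
Proof.
case/functionally_openP=> f [fc f01 ->].
have [F [Fc Fi]] := Cstar_embedding_extend01 fc f01.
by exists F; split=> // x; rewrite Fi.
Qed.

End Cstar_embedding_extension.

Section lifting_refinements.
Context {R : realType} {X Y Z : topologicalType}.
Variables (p : X -> Y) (i : X -> Z) (k : nat).
Variables (omega : nat -> set (set Y)) (phi : nat -> set Y -> Y -> R).
Variables (gamma : nat -> set (set X)) (lab : nat -> set X -> set Y).
Variables (F : set X -> Z -> R) (P : nat -> set Y -> Z -> R).

Hypothesis omega_fin : forall m, finite_set (omega m).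
Hypothesis phi_supp : forall m O y, omega m O -> 0 < phi m O y -> O y.
Hypothesis gamma_fin : forall m, (m < k)%N -> finite_set (gamma m).
Hypothesis gamma_fo : forall m U, (m < k)%N -> gamma m U -> functionally_open R U.
Hypothesis gamma_disj : forall m U V, (m < k)%N -> gamma m U -> gamma m V ->
  U <> V -> U `&` V = set0.
Hypothesis gamma_cover : forall x, exists m U, (m < k)%N /\ gamma m U /\ U x.
Hypothesis lab_spec : forall m U, (m < k)%N -> gamma m U ->
  omega m (lab m U) /\ U `<=` p @^-1` [set y | 2^-1 < phi m (lab m U) y].
Hypothesis F_spec : forall U, functionally_open R U ->
  continuous (F U) /\ forall x, U x <-> 0 < F U (i x).
Hypothesis P_spec : forall m O, omega m O ->
  continuous (P m O) /\ forall x, P m O (i x) = phi m O (p x).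

Let lab_omega m U (mk : (m < k)%N) (gU : gamma m U) : omega m (lab m U) :=
  (lab_spec mk gU).1.
Let lab_sub m U (mk : (m < k)%N) (gU : gamma m U) :
  U `<=` p @^-1` [set y | 2^-1 < phi m (lab m U) y] := (lab_spec mk gU).2.
Let F_cont U (Ufo : functionally_open R U) : continuous (F U) := (F_spec Ufo).1.
Let F_i U x (Ufo : functionally_open R U) : U x <-> 0 < F U (i x) :=
  (F_spec Ufo).2 x.
Let P_cont m O (oO : omega m O) : continuous (P m O) := (P_spec oO).1.
Let P_i m O x (oO : omega m O) : P m O (i x) = phi m O (p x) := (P_spec oO).2 x.

Definition cell m U : set Z :=
  \bigcap_(V in gamma m `\ U) [set z | F V z < F U z] `&`
  [set z | 2^-1 < P m (lab m U) z].

Definition cells : set Z := \bigcup_(m in `I_k) \bigcup_(U in gamma m) cell m U.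

Definition close_to y : set Z :=
  \bigcap_(m in `I_k) \bigcap_(O in omega m) [set z | `|P m O z - phi m O y| < 8^-1].

Lemma cell_functionally_open m U : (m < k)%N -> gamma m U ->
  functionally_open R (cell m U).
Proof.
move=> mk gU; have Uc := F_cont (gamma_fo mk gU).
apply: functionally_openI.
  apply: functionally_open_bigcap => [|V [gV _]]; first exact: finite_setD (gamma_fin mk).
  exact: functionally_open_lt (F_cont (gamma_fo mk gV)) Uc.
apply: functionally_open_lt (P_cont (lab_omega mk gU)) => z; exact: cvg_cst.
Qed.

Lemma cell_disjoint m U V : gamma m U -> gamma m V -> U <> V ->
  cell m U `&` cell m V = set0.
Proof.
move=> gU gV UV; apply/seteqP; split=> // z [[dU _] [dV _]].
have := dU V (conj gV (nesym UV)); have := dV U (conj gU UV).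
by move=> /lt_trans h /h; rewrite ltxx.
Qed.

Lemma open_cells : open cells.
Proof.
apply: bigcup_open => m mk; apply: bigcup_open => U gU.
exact: functionally_open_open (cell_functionally_open mk gU).
Qed.

Lemma open_close_to y : open (close_to y).
Proof.
apply: functionally_open_open; apply: functionally_open_bigcap => // m _.
apply: functionally_open_bigcap (omega_fin m) _ => O oO.
apply: functionally_open_lt => [z|]; last exact: cst_continuous.
by apply: cvg_norm; apply: cvgB; [exact: P_cont|exact: cvg_cst].
Qed.

Lemma fibre_sub_cells_close_to x : (cells `&` close_to (p x)) (i x).
Proof.
split; last by move=> m _ O oO; rewrite /= P_i // subrr normr0 invr_gt0 ltr0n.
have [m [U [mk [gU Ux]]]] := gamma_cover x.
exists m => //; exists U => //; split; last first.
  by rewrite /= P_i; [exact: (lab_sub mk gU Ux)|exact: lab_omega].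
move=> V [gV VU]; apply: le_lt_trans ((F_i _ (gamma_fo mk gU)).1 Ux).
rewrite leNgt; apply/negP => /(F_i _ (gamma_fo mk gV)) Vx.
by rewrite -[False]/(set0 x) -(gamma_disj mk gU gV (nesym VU)).
Qed.

Hypothesis p_surj : forall y, exists x, p x = y.

Section pullback.
Variable g : Y -> Z.
Hypothesis g_cont : continuous g.
Hypothesis g_close : forall x, exists y,
  (cells `&` close_to y) (g (p x)) /\ (cells `&` close_to y) (i x).

Lemma preimage_cell_sub m U : (m < k)%N -> gamma m U -> g @^-1` cell m U `<=` lab m U.
Proof.
move=> mk gU y; have [x <-] := p_surj y; case=> _ /= Pgx.
have [y' [[_ close_g] [_ close_i]]] := g_close x.
have labO := lab_omega mk gU.
have := close_g m mk _ labO; have := close_i m mk _ labO.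
rewrite /= P_i // !ltr_norml => /andP[? ?] /andP[? ?].
by apply: phi_supp labO _; lra.
Qed.

Lemma preimage_cells_refinement :
  disjoint_cozero_refinement R omega k (fun m => (fun U => g @^-1` cell m U) @` gamma m).
Proof.
split; [|split; [|split; [|split]]].
- by move=> m mk; exact: finite_image (gamma_fin mk).
- move=> m _ mk [U gU <-].
  exact: functionally_open_preimage g_cont (cell_functionally_open mk gU).
- move=> m _ _ mk [U gU <-] [V gV <-] UV.
  have {}UV : U <> V by move=> E; apply: UV; rewrite E.
  by rewrite -preimage_setI cell_disjoint // preimage_set0.
- move=> m _ mk [U gU <-]; exists (lab m U); split; first exact: lab_omega.
  exact: preimage_cell_sub.
- move=> y; have [x <-] := p_surj y; have [y' [[[m mk [U gU cellU]] _] _]] := g_close x.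
  by exists m, (g @^-1` cell m U); split=> //; split=> //; exists U.
Qed.

End pullback.

Hypothesis approx : forall W : set (set Z), (forall V, W V -> open V) ->
  (forall y, exists V, W V /\ i @` (p @^-1` [set y]) `<=` V) ->
  exists g : Y -> Z, continuous g /\ forall x, exists V, W V /\ V (g (p x)) /\ V (i x).

Lemma approximate_inverse_refinement :
  exists gamma', disjoint_cozero_refinement R omega k gamma'.
Proof.
have [|y|g [g_cont g_close]] := approx (W := range (fun y => cells `&` close_to y)).
- by move=> _ [y _ <-]; apply: openI; [exact: open_cells|exact: open_close_to].
- exists (cells `&` close_to y); split; first by exists y.
  by move=> _ [x /= <- <-]; exact: fibre_sub_cells_close_to.
exists (fun m => (fun U => g @^-1` cell m U) @` gamma m).
apply: preimage_cells_refinement g_cont _ => x.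
by have [_ [[y _ <-] close]] := g_close x; exists y.
Qed.

End lifting_refinements.

Theorem corollary5p3 (R : realType) (X Y : topologicalType) (p : X -> Y) :
  tychonoff_space R X -> tychonoff_space R Y ->
  continuous p -> (forall y : Y, exists x : X, p x = y) ->
  approximately_invertible R p ->
  finite_C_space R X -> finite_C_space R Y.
Proof.
move=> _ _ p_cont p_surj [Z [i [_ [i_Cstar approx]]]] XC.
apply/finite_C_spaceP => omega omega_cover.
have omega_fin m : finite_set (omega m) by case: (omega_cover m).
have [phi phiP] := choice (fun m => normalized_cozero_cover (omega_cover m)).
have phi_cont m O : omega m O -> continuous (phi m O).
  by case: (phiP m) => + _ _ _; apply.
have phi01 m O y : omega m O -> 0 <= phi m O y <= 1.
  by case: (phiP m) => _ + _ _; apply.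
have phi_supp m O y : omega m O -> 0 < phi m O y -> O y.
  by case: (phiP m) => _ _ + _; apply.
have shrunk_cover m :
    finite_cozero_cover R ((fun O => p @^-1` [set y | 2^-1 < phi m O y]) @` omega m).
  have [_ _ _ phi1] := phiP m; rewrite -image_comp.
  exact: finite_cozero_cover_preimage p_cont
    (superlevel_cozero_cover (omega_fin m) (@phi_cont m) phi1).
have [k [gamma [gamma_fin [gamma_fo [gamma_disj [gamma_ref gamma_cover]]]]]] :=
  (finite_C_spaceP R X).1 XC _ shrunk_cover.
have [lab lab_spec] := refinement_labelling gamma_ref.
have [F F_spec] := choice_on (fun U => Cstar_embedding_extend_cozero i_Cstar (U := U)).
have phi_ext m O (oO : omega m O) : exists G : Z -> R,
    continuous G /\ forall x, G (i x) = phi m O (p x).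
  apply: (Cstar_embedding_extend01 i_Cstar _ (fun x => phi01 m O (p x) oO)) => x.
  exact: continuous_comp (p_cont x) (phi_cont m O oO (p x)).
have [P P_spec] := choice (fun m => choice_on (phi_ext m)).
exists k; exact: (approximate_inverse_refinement omega_fin phi_supp gamma_fin
  gamma_fo gamma_disj gamma_cover lab_spec F_spec P_spec p_surj approx).
Qed.
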